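(* Let $\mathcal{I}_1\sqcup\cdots\sqcup\mathcal{I}_K=[N]$ be a partition of the modes into nonempty cells, let $\sigma_n$ denote the index of the cell containing mode $n$, let $\tilde I_1,\dots,\tilde I_K$ be positive integers and $I_n=\tilde I_{\sigma_n}$. Let $\ell:\mathbb{R}\times\mathbb{R}\to\mathbb{R}$ be differentiable in its second argument, and let $\mathcal{X}\in\mathbb{R}^{I_1\times\cdots\times I_N}$ be symmetric with respect to the partition $\mathcal{I}_1\sqcup\cdots\sqcup\mathcal{I}_K$. Define, for $\boldsymbol{\lambda}\in\mathbb{R}^r$ and $\mathbf{A}_k\in\mathbb{R}^{\tilde I_k\times r}$, $$\mathcal{F}(\boldsymbol{\lambda},\mathbf{A}_1,\dots,\mathbf{A}_K)=\sum_{i}\ell(x_i,m_i),\qquad \mathcal{M}=\sum_{j=1}^r\lambda_j(\mathbf{A}_{\sigma_1})_{:,j}\circ\cdots\circ(\mathbf{A}_{\sigma_N})_{:,j},$$ and let $\mathcal{Y}$ have entries $y_i=\frac{\partial\ell}{\partial m}(x_i,m_i)$. Then for each $k\in[K]$ and any $k'\in\mathcal{I}_k$, $$\frac{\partial\mathcal{F}}{\partial\mathbf{A}_k} = |\mathcal{I}_k|\,\mathbf{Y}_{(k')}\Big(\textstyle\bigodot_{j\neq k'}\mathbf{A}_{\sigma_j}\Big)\operatorname{diag}(\boldsymbol{\lambda}),$$ where $\bigodot_{j\neq t}\mathbf{A}_{\sigma_j}=\mathbf{A}_{\sigma_N}\odot\cdots\odot\mathbf{A}_{\sigma_{t+1}}\odot\mathbf{A}_{\sigma_{t-1}}\odot\cdots\odot\mathbf{A}_{\sigma_1}$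 and $|\mathcal{I}_k|$ is the number of modes in $\mathcal{I}_k$.
   Context: A tensor is symmetric with respect to the partition if its entries are unchanged under every permutation of its $N$ indices that maps each cell $\mathcal{I}_\ell$ to itself, i.e. $x_{(i_{\pi(1)},\dots,i_{\pi(N)})}=x_{(i_1,\dots,i_N)}$. $\circ$ is the outer product; $\odot$ is the Khatri–Rao product ($j$-th column of $\mathbf{A}\odot\mathbf{B}$ is $\mathbf{A}_{:,j}\otimes\mathbf{B}_{:,j}$). The mode-$t$ matricization $\mathbf{Y}_{(t)}\in\mathbb{R}^{I_t\times\prod_{j\neq t}I_j}$ places $y_{i_1,\dots,i_N}$ in row $i_t$ and column $1+\sum_{k\neq t}(i_k-1)\prod_{m<k,\,m\neq t}I_m$. $\partial\mathcal{F}/\partial\mathbf{A}_k$ is the matrix of partial derivatives with the shape of $\mathbf{A}_k$. *)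

From HB Require Import structures.
From mathcomp Require Import all_boot all_order all_algebra all_fingroup.
From mathcomp Require Import all_classical all_reals all_analysis.
Set Implicit Arguments. Unset Strict Implicit. Unset Printing Implicit Defensive.
Import Order.TTheory GRing.Theory Num.Theory.
Local Open Scope ring_scope.

Section PartitionSymmetricCP.
Context {R : realType} {N K r : nat} (sigma : 'I_N -> 'I_K) (Itil : 'I_K -> nat).

Definition msize (n : 'I_N) : nat := Itil (sigma n).

(* multi-indices (i_1,...,i_N) with 0 <= i_n < I_n  (0-based) *)
Definition midx := {dffun forall n : 'I_N, 'I_(msize n)}.

Definition cell (k : 'I_K) : {set 'I_N} := [set n | sigma n == k].

Definition tensor := midx -> R.

(* total accessor: value of X at a nat-valued index function f
   (0 if f is out of range; f is always in range where used) *)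
Definition tget (X : tensor) (f : 'I_N -> nat) : R :=
  \sum_(i : midx | [forall n, val (i n) == f n]) X i.

Definition mget {m c : nat} (A : 'M[R]_(m, c)) (p : nat) (j : 'I_c) : R :=
  \sum_(q : 'I_m | val q == p) A q j.

Definition partition_symmetric (X : tensor) : Prop :=
  forall pi : {perm 'I_N}, (forall n, sigma (pi n) = sigma n) ->
    forall i : midx, tget X (fun n => val (i (pi n))) = X i.

Definition cp_model (lam : 'rV[R]_r) (A : forall k : 'I_K, 'M[R]_(Itil k, r))
  : tensor := fun i => \sum_(j < r) lam 0 j * \prod_(n < N) A (sigma n) (i n) j.

Definition cp_obj (l : R -> R -> R) (X : tensor) (lam : 'rV[R]_r)
  (A : forall k : 'I_K, 'M[R]_(Itil k, r)) : R :=
  \sum_(i : midx) l (X i) (cp_model lam A i).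

Definition upd_factor (A : forall k : 'I_K, 'M[R]_(Itil k, r))
  (k : 'I_K) (p : 'I_(Itil k)) (q : 'I_r) (t : R) :
  forall k' : 'I_K, 'M[R]_(Itil k', r) :=
  fun k' => \matrix_(a, b)
    (if (k' == k) && (val a == val p) && (b == q) then t else A k' a b).

Definition grad_tensor (l : R -> R -> R) (X : tensor) (lam : 'rV[R]_r)
  (A : forall k : 'I_K, 'M[R]_(Itil k, r)) : tensor :=
  fun i => derive1 (l (X i)) (cp_model lam A i).

Definition ncols (t : 'I_N) : nat := \prod_(m < N | m != t) msize m.

(* mixed-radix weight of mode k in the mode-t unfolding: prod_{m<k, m<>t} I_m *)
Definition radix (t k : 'I_N) : nat :=
  \prod_(m < N | (m < k)%N && (m != t)) msize m.

(* 0-based column of y_i in Y_(t): sum_{k<>t} i_k prod_{m<k, m<>t} I_m *)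
Definition col_of (t : 'I_N) (i : midx) : nat :=
  (\sum_(k < N | k != t) val (i k) * radix t k)%N.

(* mode-t matricization Y_(t): y_i is placed in row i_t, column col_of t i *)
Definition unfold (t : 'I_N) (Y : tensor) : 'M[R]_(msize t, ncols t) :=
  \matrix_(a, c) \sum_(i : midx | (val (i t) == val a) && (col_of t i == val c)) Y i.

(* Khatri-Rao product A_{sigma_N} (.) ... (.) A_{sigma_{t+1}} (.) A_{sigma_{t-1}}
   (.) ... (.) A_{sigma_1}: column j is the Kronecker product of the columns,
   whose (0-based) row c corresponds to the indices
   i_k = (c / prod_{m<k, m<>t} I_m) mod I_k  (A_{sigma_1} varying fastest). *)
Definition khatri_rao_except (A : forall k : 'I_K, 'M[R]_(Itil k, r)) (t : 'I_N)
  : 'M[R]_(ncols t, r) :=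
  \matrix_(c, j) \prod_(k < N | k != t)
     mget (A (sigma k)) ((val c %/ radix t k) %% msize k)%N j.

End PartitionSymmetricCP.

From HB Require Import structures.
From mathcomp Require Import all_boot all_order all_algebra all_fingroup.
From mathcomp Require Import all_classical all_reals all_analysis.
From mathcomp Require Import zify.
Import Order.TTheory GRing.Theory Num.Theory numFieldNormedType.Exports.
Set Implicit Arguments. Unset Strict Implicit.
Local Open Scope ring_scope.

(* Differentiating F in the entry (p, q) of A_k hits every mode n of the cell
   I_k; by the chain rule, the hit at mode n contributes lam_q times the
   (p, q) entry of the mode-n MTTKRP Y_(n) (KR_{j <> n} A_{sigma_j}).  The
   gradient tensor Y inherits the partition symmetry of X (the model M is
   symmetric by construction), and the transposition of two modes n, n' of
   the same cell carries the mode-n MTTKRP onto the mode-n' one, so the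
   |I_k| contributions coincide.  On the matrix side, the column index of
   Y_(t) is the mixed-radix number with digits i_j and place values
   prod_{m < j, m <> t} I_m; extracting these digits again recovers exactly
   the row of the Khatri-Rao product that multiplies y_i. *)

Lemma dvdn_prod_subpred (I : Type) (r : seq I) (P Q : pred I) (F : I -> nat) :
  subpred P Q -> (\prod_(i <- r | P i) F i %| \prod_(i <- r | Q i) F i)%N.
Proof.
move=> PQ; rewrite [X in (_ %| X)%N](bigID P) /=.
rewrite (eq_bigl P) ?dvdn_mulr // => i.
by case: (boolP (P i)) => Pi; rewrite ?andbT ?andbF ?PQ.
Qed.

Lemma big_ord_ltS (T : Type) (idx : T) (op : Monoid.com_law idx) (N : nat)
    (P : pred 'I_N) (F : 'I_N -> T) (m : 'I_N) :
  \big[op/idx]_(j < N | (j < m.+1)%N && P j) F j =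
  op (\big[op/idx]_(j < N | (j < m)%N && P j) F j) (if P m then F m else idx).
Proof.
case: (boolP (P m)) => Pm; last first.
  rewrite Monoid.mulm1; apply: eq_bigl => j; rewrite ltnS leq_eqVlt val_eqE.
  by case: (eqVneq j m) => [->|_] //=; rewrite ltnn (negbTE Pm).
rewrite (bigD1 m) /= ?ltnS ?leqnn ?Pm // Monoid.mulmC; congr (op _ _).
apply: eq_bigl => j; rewrite ltnS leq_eqVlt val_eqE.
by case: (eqVneq j m) => [->|_] /=; rewrite ?ltnn ?andbF ?andbT.
Qed.

Section MixedRadix.
Local Open Scope nat_scope.
Variables (N : nat) (s : 'I_N -> nat) (t : 'I_N).

Definition place_value (k : nat) := \prod_(m < N | (m < k) && (m != t)) s m.

Lemma place_value_dvd k1 k2 : k1 <= k2 -> place_value k1 %| place_value k2.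
Proof.
move=> le12; apply: dvdn_prod_subpred => m /andP[mk1 ->].
by rewrite (leq_trans mk1 le12).
Qed.

Lemma place_valueS (m : 'I_N) :
  place_value m.+1 = place_value m * (if m != t then s m else 1).
Proof. exact: big_ord_ltS. Qed.

Lemma place_value_mul_dvd (m : 'I_N) k :
  m != t -> m < k -> place_value m * s m %| place_value k.
Proof.
move=> mt mk; rewrite (_ : _ * _ = place_value m.+1) ?place_value_dvd //.
by rewrite place_valueS mt.
Qed.

Variable d : 'I_N -> nat.
Hypothesis d_lt_s : forall m, d m < s m.

Lemma place_value_gt0 k : 0 < place_value k.
Proof. by apply: prodn_gt0 => m; apply: leq_ltn_trans (d_lt_s m). Qed.

Lemma digits_lt_place_value k : k <= N ->
  \sum_(j < N | (j < k) && (j != t)) d j * place_value j < place_value k.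
Proof.
elim: k => [_|k IH kN]; first by rewrite big_pred0 ?place_value_gt0.
have := IH (ltnW kN); set m := Ordinal kN.
rewrite -[k]/(val m) (big_ord_ltS (addn : Monoid.com_law 0)) place_valueS.
case: (m != t) => /= [|]; last by rewrite addn0 muln1.
by have := d_lt_s m; nia.
Qed.

Definition digits_value := \sum_(j < N | j != t) d j * place_value j.

Lemma digits_value_lt : digits_value < \prod_(j < N | j != t) s j.
Proof.
have := digits_lt_place_value (leqnn N); rewrite /place_value /digits_value.
by under eq_bigl do rewrite ltn_ord; under [X in _ < X]eq_bigl do rewrite ltn_ord.
Qed.

Lemma digits_valueK (m : 'I_N) : m != t ->
  (digits_value %/ place_value m) %% s m = d m.
Proof.
move=> mt; rewrite /digits_value (bigID (fun j : 'I_N => j < m)) /=.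
rewrite [X in _ + X](bigD1 m) /= ?mt ?ltnn //.
set L := \sum_(j < N | _ && (j < m)) _; set H := \sum_(j < N | _) _.
have L_lt : L < place_value m.
  by have := digits_lt_place_value (ltnW (ltn_ord m)); under eq_bigl do rewrite andbC.
have H_dvd : place_value m * s m %| H.
  apply: dvdn_sum => j /andP[/andP[jt jm] jnm].
  apply/dvdn_mull/place_value_mul_dvd => //.
  by rewrite ltn_neqAle leqNgt jm andbT val_eqE eq_sym.
rewrite -(divnK H_dvd); set Q := H %/ _.
rewrite (_ : L + _ = (d m + Q * s m) * place_value m + L); last first.
  by rewrite mulnDl -mulnA [s m * _]mulnC; lia.
rewrite divnMDl ?place_value_gt0 // divn_small // addn0.
by rewrite addnC modnMDl modn_small.
Qed.

End MixedRadix.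

Lemma is_derive_big_sum (R : numFieldType) (V W : normedModType R) (I : Type)
    (s : seq I) (h : I -> V -> W) (dh : I -> W) (x v : V) :
  (forall i, is_derive x v (h i) (dh i)) ->
  is_derive x v (fun y => \sum_(i <- s) h i y) (\sum_(i <- s) dh i).
Proof.
move=> hd; rewrite (_ : (fun y => _) = \sum_(i <- s) h i); last first.
  by apply/funext => y; rewrite fct_sumE.
by elim/big_ind2 : _ => // *; [exact: is_derive_cst | exact: is_deriveD].
Qed.

Lemma is_derive_big_prod (R : numFieldType) (V : normedModType R) (I : eqType)
    (s : seq I) (f : I -> V -> R) (df : I -> R) (x v : V) :
  uniq s -> (forall i, is_derive x v (f i) (df i)) ->
  is_derive x v (fun y => \prod_(i <- s) f i y)
    (\sum_(i <- s) df i * \prod_(j <- s | j != i) f j x).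
Proof.
move=> s_uniq hd; elim: s s_uniq => [_|a s IH /= /andP[a_s s_uniq]].
  rewrite big_nil (_ : (fun y => _) = cst 1); first exact: is_derive_cst.
  by apply/funext => y; rewrite big_nil.
rewrite (_ : (fun y => _) = f a * (fun y => \prod_(i <- s) f i y)); last first.
  by apply/funext => y; rewrite big_cons.
apply: is_derive_eq; first exact: is_deriveM (hd a) (IH s_uniq).
have neq_a i : i \in s -> a != i by apply: contraTneq => <-.
rewrite big_cons big_cons eqxx /= addrC /GRing.scale /= mulrC; congr (_ * _ + _).
  rewrite big_seq_cond [RHS]big_seq_cond; apply: eq_bigl => j.
  by case: (boolP (j \in s)) => //= /neq_a; rewrite eq_sym => ->.
rewrite big_distrr /= !big_seq; apply: eq_bigr => i /neq_a a_i.
by rewrite big_cons a_i mulrCA.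
Qed.

Lemma is_derive1_comp (R : realFieldType) (f g : R -> R) (x df : R) :
  is_derive x 1 f df -> derivable g (f x) 1 ->
  is_derive x 1 (g \o f) (derive1 g (f x) * df).
Proof.
move=> f_df g_der; have f_der : derivable f x 1 by case: f_df.
apply: DeriveDef.
  by apply/derivable1_diffP/differentiable_comp; apply/derivable1_diffP.
by rewrite -derive1E derive1_comp // [f^`()%classic x]derive1E derive_val.
Qed.

Lemma mgetE (R : realType) (m c : nat) (B : 'M[R]_(m, c)) (a : 'I_m) (j : 'I_c) :
  mget B a j = B a j.
Proof. by rewrite /mget (big_pred1 a) // => b; rewrite val_eqE. Qed.

Section PartitionSymmetricCPGradient.
Context {R : realType} {N K r : nat} (sigma : 'I_N -> 'I_K) (Itil : 'I_K -> nat).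
Local Notation midx := (midx sigma Itil).
Local Notation tensor := (@tensor R N K sigma Itil).

Lemma tgetE (Y : tensor) (i : midx) : tget Y (fun n => val (i n)) = Y i.
Proof.
rewrite /tget (big_pred1 i) // => i'; apply/forallP/eqP => [i'_i|-> //].
by apply/ffunP => n; apply/val_inj/eqP/i'_i.
Qed.

Section CellPermutation.
Variables (pi : {perm 'I_N}) (pi_sigma : forall n, sigma (pi n) = sigma n).

(* The cast is needed because I_(pi n) = I_n holds only propositionally. *)
Definition perm_midx (i : midx) : midx :=
  [ffun n => cast_ord (congr1 Itil (pi_sigma n)) (i (pi n))].

Lemma perm_midxE (i : midx) n : val (perm_midx i n) = val (i (pi n)).
Proof. by rewrite ffunE. Qed.

Lemma perm_midx_inj : injective perm_midx.
Proof.
move=> i1 i2 /(congr1 (fun i : midx => val (i ((pi^-1)%g _)))) eq12.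
by apply/ffunP => n; apply/val_inj; have := eq12 n; rewrite !perm_midxE permKV.
Qed.

Lemma tget_perm (Y : tensor) (i : midx) :
  tget Y (fun n => val (i (pi n))) = Y (perm_midx i).
Proof. by rewrite -tgetE; congr tget; apply/funext => n; rewrite perm_midxE. Qed.

Variable A : forall k : 'I_K, 'M[R]_(Itil k, r).

Lemma prod_perm_midx (P : pred 'I_N) (i : midx) (j : 'I_r) :
  \prod_(n | P n) A (sigma n) (perm_midx i n) j =
  \prod_(n | P ((pi^-1)%g n)) A (sigma n) (i n) j.
Proof.
rewrite [RHS](reindex_inj (@perm_inj _ pi)) /=.
under [RHS]eq_bigl do rewrite permK.
apply: eq_bigr => n _; rewrite -!mgetE perm_midxE.
by rewrite -(pi_sigma n).
Qed.

Lemma cp_model_perm_midx (lam : 'rV[R]_r) (i : midx) :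
  cp_model lam A (perm_midx i) = cp_model lam A i.
Proof. by apply: eq_bigr => j _; rewrite prod_perm_midx. Qed.

End CellPermutation.

Lemma partition_symmetricE (Y : tensor) :
  partition_symmetric Y <->
  forall (pi : {perm 'I_N}) (pi_sigma : forall n, sigma (pi n) = sigma n) (i : midx),
    Y (perm_midx pi_sigma i) = Y i.
Proof.
by split=> Y_sym pi pi_sigma i; [rewrite -tget_perm | rewrite tget_perm]; apply: Y_sym.
Qed.

Variable A : forall k : 'I_K, 'M[R]_(Itil k, r).

Lemma grad_tensor_partition_symmetric (l : R -> R -> R) (X : tensor) (lam : 'rV[R]_r) :
  partition_symmetric X -> partition_symmetric (grad_tensor l X lam A).
Proof.
move=> /partition_symmetricE X_sym; apply/partition_symmetricE => pi pi_sigma i.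
by rewrite /grad_tensor X_sym cp_model_perm_midx.
Qed.

(* The entry (p, q) of Y_(t) (KR_{j <> t} A_{sigma_j}), summed directly over
   multi-indices instead of matrix columns. *)
Definition mttkrp (Y : tensor) (t : 'I_N) (p : nat) (q : 'I_r) : R :=
  \sum_(i : midx | val (i t) == p) Y i * \prod_(m | m != t) A (sigma m) (i m) q.

Lemma mttkrp_cell_invariant (Y : tensor) (n1 n2 : 'I_N) p q :
  partition_symmetric Y -> sigma n1 = sigma n2 -> mttkrp Y n1 p q = mttkrp Y n2 p q.
Proof.
move=> /partition_symmetricE Y_sym sigma12; set pi := tperm n1 n2.
have pi_sigma n : sigma (pi n) = sigma n.
  by rewrite /pi; case: tpermP => [->|->|]; rewrite ?sigma12.
rewrite /mttkrp [RHS](reindex_inj (perm_midx_inj (pi_sigma:=pi_sigma))) /=.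
apply: eq_big => [i|i _]; first by rewrite perm_midxE /pi tpermR.
rewrite Y_sym prod_perm_midx tpermV; congr (_ * _); apply: eq_bigl => m.
by rewrite /pi; case: tpermP => [->|->|/eqP -> /eqP ->]; rewrite ?eqxx ?(eq_sym n1).
Qed.

Section FactorEntry.
Variables (k : 'I_K) (p : 'I_(Itil k)) (q : 'I_r).

Lemma upd_factor_id : upd_factor A p q (A k p q) = A.
Proof.
apply: functional_extensionality_dep => k'; apply/matrixP => a b; rewrite mxE.
case: ifP => // /andP[/andP[/eqP k'k /eqP ap] /eqP ->]; subst k'.
by rewrite (_ : a = p) //; apply: val_inj.
Qed.

Lemma is_derive_upd_factor (k' : 'I_K) (a : 'I_(Itil k')) (b : 'I_r) (x : R) :
  is_derive x 1 (fun t => upd_factor A p q t k' a b)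
    (if (k' == k) && (val a == val p) && (b == q) then 1 else 0).
Proof.
rewrite (_ : (fun t => _) = fun t =>
    if (k' == k) && (val a == val p) && (b == q) then t else A k' a b).
  by case: ifP => _; [exact: is_derive_id | exact: is_derive_cst].
by apply/funext => t; rewrite mxE.
Qed.

Lemma is_derive_cp_model (lam : 'rV[R]_r) (i : midx) :
  is_derive (A k p q) 1 (fun t => cp_model lam (upd_factor A p q t) i)
    (lam 0 q * \sum_(n | (sigma n == k) && (val (i n) == val p))
                 \prod_(m | m != n) A (sigma m) (i m) q).
Proof.
apply: is_derive_eq.
  apply: is_derive_big_sum => j; apply: is_deriveZ.
  apply: is_derive_big_prod => [|n]; first exact: index_enum_uniq.
  exact: is_derive_upd_factor.
rewrite (bigD1 q) //= [X in _ + X]big1 ?addr0 => [|j /negbTE jq]; last first.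
  by rewrite big1 ?scaler0 // => n _; rewrite jq andbF mul0r.
rewrite upd_factor_id; congr (_ * _); rewrite [RHS]big_mkcond; apply: eq_bigr => n _.
by rewrite eqxx andbT; case: ifP; rewrite ?mul1r ?mul0r.
Qed.

Lemma is_derive_cp_obj (l : R -> R -> R) (l_diff : forall x m, derivable (l x) m 1)
    (X : tensor) (lam : 'rV[R]_r) :
  is_derive (A k p q) 1 (fun t => cp_obj l X lam (upd_factor A p q t))
    (lam 0 q * \sum_(n | sigma n == k) mttkrp (grad_tensor l X lam A) n p q).
Proof.
apply: is_derive_eq.
  apply: is_derive_big_sum => i.
  exact: is_derive1_comp (is_derive_cp_model lam i) (l_diff _ _).
under eq_bigr do rewrite /= upd_factor_id mulrCA big_distrr /=.
rewrite -big_distrr /=; congr (_ * _).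
under eq_bigr do rewrite big_mkcondr /=.
rewrite exchange_big /=; apply: eq_bigr => n _; rewrite [RHS]big_mkcond /=.
by apply: eq_bigr => i _.
Qed.

End FactorEntry.

Lemma col_of_lt (t : 'I_N) (i : midx) : (col_of t i < ncols sigma Itil t)%N.
Proof. exact: (@digits_value_lt _ _ t _ (fun m => ltn_ord (i m))). Qed.

Lemma khatri_rao_except_col_of (t : 'I_N) (i : midx) (q : 'I_r) :
  khatri_rao_except sigma A t (Ordinal (col_of_lt t i)) q =
  \prod_(m | m != t) A (sigma m) (i m) q.
Proof.
rewrite mxE; apply: eq_bigr => m mt.
by rewrite (@digits_valueK _ _ t _ (fun m => ltn_ord (i m))) // mgetE.
Qed.

Lemma unfold_mul_khatri_rao (t : 'I_N) (Y : tensor) (a : 'I_(msize sigma Itil t)) q :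
  (unfold t Y *m khatri_rao_except sigma A t) a q = mttkrp Y t a q.
Proof.
rewrite mxE /mttkrp (partition_big (fun i => Ordinal (col_of_lt t i)) xpredT) //=.
apply: eq_bigr => c _; rewrite mxE big_distrl /=.
apply: eq_big => [i | i /andP[_ /eqP ci]]; first by rewrite -val_eqE.
rewrite (_ : c = Ordinal (col_of_lt t i)) ?khatri_rao_except_col_of //.
exact: val_inj.
Qed.

Lemma mget_unfold_khatri_rao_diag (t : 'I_N) (Y : tensor) (lam : 'rV[R]_r) v q :
  mget (unfold t Y *m khatri_rao_except sigma A t *m diag_mx lam) v q =
  lam 0 q * mttkrp Y t v q.
Proof.
rewrite /mget mul_mx_diag; under eq_bigr do rewrite mxE unfold_mul_khatri_rao mulrC.
rewrite -big_distrr /=; congr (_ * _).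
rewrite /mttkrp (partition_big (fun i : midx => i t) (fun a => val a == v)) //=.
by apply: eq_bigr => a /eqP <-; apply: eq_bigl => i; rewrite val_eqE andbb.
Qed.

End PartitionSymmetricCPGradient.

Theorem corollary1 (R : realType) (N K r : nat)
  (sigma : 'I_N -> 'I_K) (Itil : 'I_K -> nat)
  (cells_nonempty : forall k : 'I_K, exists n : 'I_N, sigma n = k)
  (Itil_pos : forall k : 'I_K, (0 < Itil k)%N)
  (l : R -> R -> R)
  (l_diff : forall x m : R, derivable (l x) m 1)
  (X : tensor sigma Itil)
  (X_sym : partition_symmetric X)
  (lam : 'rV[R]_r) (A : forall k : 'I_K, 'M[R]_(Itil k, r)) :
  forall (k : 'I_K) (k' : 'I_N), k' \in cell sigma k ->
  forall (p : 'I_(Itil k)) (q : 'I_r),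
    is_derive (A k p q) 1
      (fun t : R => cp_obj l X lam (upd_factor A p q t))
      (#|cell sigma k|%:R *
         mget (unfold k' (grad_tensor l X lam A)
                 *m khatri_rao_except sigma A k' *m diag_mx lam) (val p) q).
Proof.
move=> k k'; rewrite inE => /eqP sigma_k' p q.
apply: is_derive_eq (is_derive_cp_obj A p q l_diff X lam) _.
rewrite mget_unfold_khatri_rao_diag mulrCA; congr (_ * _).
have Y_sym := grad_tensor_partition_symmetric A l lam X_sym.
under eq_bigr => n /eqP sigma_n do
  rewrite (mttkrp_cell_invariant A _ q Y_sym (etrans sigma_n (esym sigma_k'))).
by rewrite sumr_const mulr_natl; congr (_ *+ _); apply: eq_card => n; rewrite inE.
Qed.
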